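(* If a CRN protocol $\Pi=(\mathcal{S},\mathcal{R})$ is stably (resp. haltingly) correct with respect to an interface $\mathcal{I}$ under a weakly fair scheduler, then $\Pi$ is also stably (resp. haltingly) correct with respect to $\mathcal{I}$ under a strongly fair scheduler.
   Context: CRN protocol $\Pi=(\mathcal{S},\mathcal{R})$: finite species set $\mathcal{S}$, finite reaction set $\mathcal{R}\subset\mathbb{N}^{\mathcal{S}}\times\mathbb{N}^{\mathcal{S}}$ of reactions $(\mathbf{r},\mathbf{p})$ with $\|\mathbf{r}\|_1\in\{1,2\}$, $\|\mathbf{r}\|_1\le\|\mathbf{p}\|_1$, each reactant vector $\mathbf{r}$ with $1\le\|\mathbf{r}\|_1\le2$ having at least one reaction, void reactions ($\mathbf{r}=\mathbf{p}$) being the unique reaction for their reactant vector; the protocol respects finite density (configurations reachable from $\mathbf{c}$ have molecular count $O(\|\mathbf{c}\|_1)$). Configurations $\mathbf{c}\in\mathbb{N}^{\mathcal{S}}$, $\|\mathbf{c}\|_1\ge1$; $(\mathbf{r},\mathbf{p})$ applicable to $\mathbf{c}$ iff $\mathbf{r}\le\mathbf{c}$, producing $\mathbf{c}-\mathbf{r}+\mathbf{p}$; $\operatorname{app}(\mathbf{c})$ the applicable reactions; reachability $\stackrel{*}{\rightharpoonup}$. $\mathrm{stab}(Z)=\{\mathbf{c}\in Z:\mathbf{c}\stackrel{*}{\rightharpoonup}\mathbf{c}'\Rightarrow\mathbf{c}'\in Z\}$, $\mathrm{halt}(Z)=\{\mathbf{c}\in Z:\mathbf{c}\stackrel{*}{\rightharpoonup}\mathbf{c}'\Rightarrow\mathbf{c}'=\mathbf{c}\}$.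 An execution $\langle\mathbf{c}^t,\alpha^t\rangle_{t\ge0}$ has $\alpha^t\in\operatorname{app}(\mathbf{c}^t)$, $\mathbf{c}^{t+1}=\alpha^t(\mathbf{c}^t)$. Weakly fair: for all $t$ and $\alpha\in\operatorname{app}(\mathbf{c}^t)$ there is $t'\ge t$ with $\alpha^{t'}=\alpha$ or $\alpha\notin\operatorname{app}(\mathbf{c}^{t'})$. Strongly fair: if a configuration $\mathbf{c}$ appears infinitely often then every configuration reachable from $\mathbf{c}$ appears infinitely often. Stabilizes (halts) into $Z$: some $\mathbf{c}^t\in\mathrm{stab}(Z)$ ($\mathrm{halt}(Z)$). Interface $\mathcal{I}=(\mathcal{U},\mu,\mathcal{C})$: $\mu:\mathcal{S}\to\mathcal{U}$, $\mathcal{C}\subseteq\mathbb{N}^{\mathcal{U}}\times\mathbb{N}^{\mathcal{U}}$, $\mu(\mathbf{c})(u)=\sum_{A:\mu(A)=u}\mathbf{c}(A)$, $Z_{\mathcal{I}}(\mathbf{c}^0)=\{\mathbf{c}:(\mu(\mathbf{c}^0),\mu(\mathbf{c}))\in\mathcal{C}\}$; $\mathbf{c}^0$ valid if $Z_{\mathcal{I}}(\mathbf{c}^0)\ne\emptyset$. $\Pi$ is stably (haltingly) correct w.r.t. $\mathcal{I}$ under a weakly (resp. strongly) fair scheduler if every weakly (resp. strongly) fair execution from a valid $\mathbf{c}^0$ stabilizes (halts) into $Z_{\mathcal{I}}(\mathbf{c}^0)$. *)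

From mathcomp Require Import all_boot.
Set Implicit Arguments. Unset Strict Implicit. Unset Printing Implicit Defensive.

Section CRN.
Variable S : finType.

Definition config := {ffun S -> nat}.
Definition norm1 (c : config) : nat := \sum_(s : S) c s.
Definition cle (a b : config) : bool := [forall s, a s <= b s].

Definition reaction := (config * config)%type.

Definition react (a : reaction) (c : config) : config :=
  [ffun s => c s - a.1 s + a.2 s].

Definition applicable (a : reaction) (c : config) : bool := cle a.1 c.

Definition app (R : seq reaction) (c : config) (a : reaction) : Prop :=
  a \in R /\ applicable a c.

Definition step (R : seq reaction) (c c' : config) : Prop :=
  exists a, app R c a /\ c' = react a c.

Inductive reach (R : seq reaction) : config -> config -> Prop :=
| reach_refl c : reach R c c
| reach_step c c' c'' : step R c c' -> reach R c' c'' -> reach R c c''.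

Definition is_protocol (R : seq reaction) : Prop :=
  [/\ (forall a, a \in R -> 1 <= norm1 a.1 <= 2 /\ norm1 a.1 <= norm1 a.2),
      (forall r : config, 1 <= norm1 r <= 2 -> exists p, (r, p) \in R),
      (forall r p : config, (r, r) \in R -> (r, p) \in R -> p = r) &
      exists K : nat, forall c c' : config, 1 <= norm1 c -> reach R c c' ->
        norm1 c' <= K * norm1 c].

Definition stab (R : seq reaction) (Z : config -> Prop) (c : config) : Prop :=
  Z c /\ forall c', reach R c c' -> Z c'.
Definition halt (R : seq reaction) (Z : config -> Prop) (c : config) : Prop :=
  Z c /\ forall c', reach R c c' -> c' = c.

Record execution (R : seq reaction) (c0 : config) := Execution {
  ex_c : nat -> config;
  ex_a : nat -> reaction;
  ex_start : ex_c 0 = c0;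
  ex_app : forall t, app R (ex_c t) (ex_a t);
  ex_next : forall t, ex_c t.+1 = react (ex_a t) (ex_c t) }.

Definition weakly_fair (R : seq reaction) (c0 : config) (e : execution R c0) : Prop :=
  forall t a, app R (ex_c e t) a ->
    exists t', t <= t' /\ (ex_a e t' = a \/ ~ app R (ex_c e t') a).

Definition infinitely_often (f : nat -> config) (c : config) : Prop :=
  forall n, exists t, n <= t /\ f t = c.

Definition strongly_fair (R : seq reaction) (c0 : config) (e : execution R c0) : Prop :=
  forall c, infinitely_often (ex_c e) c ->
    forall c', reach R c c' -> infinitely_often (ex_c e) c'.

Definition stabilizes_into (R : seq reaction) (c0 : config) (e : execution R c0)
  (Z : config -> Prop) : Prop := exists t, stab R Z (ex_c e t).
Definition halts_into (R : seq reaction) (c0 : config) (e : execution R c0)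
  (Z : config -> Prop) : Prop := exists t, halt R Z (ex_c e t).

Definition proj (U : finType) (mu : S -> U) (c : config) : {ffun U -> nat} :=
  [ffun u => \sum_(A : S | mu A == u) c A].

Definition Zint (U : finType) (mu : S -> U)
  (C : {ffun U -> nat} -> {ffun U -> nat} -> Prop) (c0 : config) : config -> Prop :=
  fun c => C (proj mu c0) (proj mu c).

Definition valid (U : finType) (mu : S -> U)
  (C : {ffun U -> nat} -> {ffun U -> nat} -> Prop) (c0 : config) : Prop :=
  1 <= norm1 c0 /\ exists c, Zint mu C c0 c.

Inductive sched := Weak | Strong.
Inductive mode := Stably | Haltingly.

Definition fair (sc : sched) (R : seq reaction) (c0 : config) (e : execution R c0) :=
  match sc with Weak => weakly_fair e | Strong => strongly_fair e end.

Definition into (m : mode) (R : seq reaction) (c0 : config) (e : execution R c0)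
  (Z : config -> Prop) :=
  match m with Stably => stabilizes_into e Z | Haltingly => halts_into e Z end.

Definition correct (m : mode) (sc : sched) (R : seq reaction) (U : finType)
  (mu : S -> U) (C : {ffun U -> nat} -> {ffun U -> nat} -> Prop) : Prop :=
  forall c0 : config, valid mu C c0 ->
    forall e : execution R c0, fair sc e -> into m e (Zint mu C c0).

End CRN.

From mathcomp Require Import all_boot.
From Stdlib Require Import Classical.
Set Implicit Arguments. Unset Strict Implicit. Unset Printing Implicit Defensive.

(* By finite density every execution stays in a finite set of configurations,
   so some configuration c is visited infinitely often, say at time t0.
   Extend the first t0 steps of a strongly fair execution e by a round-robin
   scheduler; the result e' is weakly fair, hence stabilizes (halts) at some
   configuration.  Every configuration of e' is either one of e's first t0 or
   reachable from c, so strong fairness makes e visit it too. *)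

Lemma fin_seq_recurrent (T : finType) (g : nat -> T) :
  exists x, forall n, exists t, n <= t /\ g t = x.
Proof.
apply: NNPP => no_recurrent.
have eventually_avoids x : exists n, forall t, n <= t -> g t != x.
  apply: NNPP => recurrent; apply: no_recurrent; exists x => n.
  apply: NNPP => avoids; apply: recurrent; exists n => t le_nt.
  by apply/eqP => gt; apply: avoids; exists t.
have [bound avoids_after] := fin_all_exists eventually_avoids.
have /avoids_after := @leq_bigmax _ bound (g (\max_x bound x)).
by rewrite eqxx.
Qed.

Lemma bounded_seq_recurrent (S : finType) (f : nat -> config S) (B : nat) :
  (forall t s, f t s <= B) -> exists t0, infinitely_often f (f t0).
Proof.
move=> f_bounded.
pose g t : {ffun S -> 'I_B.+1} := [ffun s => inord (f t s)].
have [x recurs] := fin_seq_recurrent g.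
have [t0 [_ gt0]] := recurs 0.
exists t0 => n; have [t [le_nt gt]] := recurs n; exists t; split => //.
apply/ffunP => s; have : g t s = g t0 s by rewrite gt gt0.
by rewrite !ffunE => /(congr1 val) /=; rewrite !inordK // ltnS.
Qed.

Lemma config_le_norm1 (S : finType) (c : config S) s : c s <= norm1 c.
Proof. by rewrite /norm1 (bigD1 s) //= leq_addr. Qed.

Lemma norm1_gt0 (S : finType) (c : config S) : 0 < norm1 c -> exists s, 0 < c s.
Proof.
move=> c_gt0; rewrite lt0n sum_nat_eq0 in c_gt0.
by have /forallPn [s] := c_gt0; rewrite -lt0n; exists s.
Qed.

Lemma reach_execution (S : finType) (R : seq (reaction S)) c0
    (e : execution R c0) s t :
  s <= t -> reach R (ex_c e s) (ex_c e t).
Proof.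
move=> /subnKC <-; move: (t - s) => k; elim: k s => [|k IHk] s.
  by rewrite addn0; constructor.
rewrite -addSnnS; apply: reach_step (IHk s.+1).
by exists (ex_a e s); split; [exact: ex_app | exact: ex_next].
Qed.

Lemma execution_recurrent (S : finType) (R : seq (reaction S)) c0
    (e : execution R c0) :
  is_protocol R -> 0 < norm1 c0 -> exists t0, infinitely_often (ex_c e) (ex_c e t0).
Proof.
move=> [_ _ _ [K dense]] c0_gt0; apply: (@bounded_seq_recurrent _ _ (K * norm1 c0)).
move=> t s; apply: leq_trans (config_le_norm1 _ s) (dense _ _ c0_gt0 _).
by have := reach_execution e (leq0n t); rewrite ex_start.
Qed.

Lemma norm1_react_gt0 (S : finType) (R : seq (reaction S)) a c :
  is_protocol R -> a \in R -> 0 < norm1 (react a c).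
Proof.
move=> [sizes _ _ _] aR; have [/andP [r_gt0 _] le_rp] := sizes a aR.
have [s p_s] := norm1_gt0 (leq_trans r_gt0 le_rp).
apply: leq_trans (config_le_norm1 _ s); rewrite ffunE.
exact: leq_trans p_s (leq_addl _ _).
Qed.

(* Some molecule s is present, and the unimolecular reactant vector {s} has a reaction. *)
Lemma has_applicable (S : finType) (R : seq (reaction S)) (c : config S) :
  is_protocol R -> 0 < norm1 c -> has (fun a => applicable a c) R.
Proof.
move=> [_ total _ _] c_gt0; have [s c_s] := norm1_gt0 c_gt0.
pose r : config S := [ffun x => (x == s) : nat].
have norm1_r : norm1 r = 1.
  rewrite /norm1 (bigD1 s) //= big1 ?ffunE ?eqxx // => x /negbTE.
  by rewrite ffunE => ->.
have [p rpR] : exists p, (r, p) \in R by apply: total; rewrite norm1_r.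
apply/hasP; exists (r, p) => //; apply/forallP => x /=; rewrite ffunE.
by case: eqP => [->|].
Qed.

Section WeaklyFairExtension.
Variables (S : finType) (R : seq (reaction S)) (c0 : config S).
Variables (e : execution R c0) (t0 : nat).

Let a0 : reaction S := ([ffun=> 0], [ffun=> 0]).

Definition extension_reaction t (c : config S) : reaction S :=
  let a := nth a0 R (t %% size R) in
  if t < t0 then ex_a e t
  else if applicable a c then a
  else nth a0 R (find (fun b => applicable b c) R).

Fixpoint extension_config t : config S :=
  if t is t'.+1 then react (extension_reaction t' (extension_config t'))
                          (extension_config t')
  else c0.

Lemma extension_config_prefix t : t <= t0 -> extension_config t = ex_c e t.
Proof.
elim: t => [|t IHt] le_t_t0 /=; first by rewrite ex_start.
by rewrite IHt ?(ltnW le_t_t0) // /extension_reaction le_t_t0 ex_next.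
Qed.

Hypotheses (protocolR : is_protocol R) (c0_gt0 : 0 < norm1 c0).

Lemma extension_reaction_app t :
  0 < norm1 (extension_config t) ->
  app R (extension_config t) (extension_reaction t (extension_config t)).
Proof.
move=> c_gt0; rewrite /extension_reaction; case: ifP => [lt_t_t0|_].
  by rewrite (extension_config_prefix (ltnW lt_t_t0)); exact: ex_app.
have has_app := has_applicable protocolR c_gt0.
have size_gt0 : 0 < size R by case: (R) has_app.
case: ifP => [a_app|_]; first by split => //; apply: mem_nth; rewrite ltn_mod.
by split; [apply: mem_nth; rewrite -has_find | exact: (nth_find a0 has_app)].
Qed.

Lemma extension_config_gt0 t : 0 < norm1 (extension_config t).
Proof.
elim: t => [|t IHt] //=; apply: (norm1_react_gt0 _ protocolR).
by case: (extension_reaction_app IHt).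
Qed.

Definition extension : execution R c0 :=
  @Execution S R c0 extension_config
    (fun t => extension_reaction t (extension_config t)) erefl
    (fun t => extension_reaction_app (extension_config_gt0 t)) (fun t => erefl).

(* After both t and t0, the round-robin candidate at time t' is a itself. *)
Lemma extension_weakly_fair : weakly_fair extension.
Proof.
move=> t a /= [aR _]; have size_gt0 : 0 < size R by case: (R) aR.
have index_lt : index a R < size R by rewrite index_mem.
set t' := (t + t0) * size R + index a R.
have le_t0_t' : t0 <= t'.
  by rewrite (leq_trans _ (leq_addr _ _)) // (leq_trans _ (leq_pmulr _ _)) ?leq_addl.
exists t'; split.
  by rewrite (leq_trans _ (leq_addr _ _)) // (leq_trans _ (leq_pmulr _ _)) ?leq_addr.
rewrite /extension_reaction ltnNge le_t0_t' /t' /= modnMDl modn_small // nth_index //.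
by case: ifP => [_|a_napp]; [left | right => -[_]; rewrite a_napp].
Qed.

Lemma weakly_fair_extension :
  exists e' : execution R c0,
    weakly_fair e' /\ forall t, t <= t0 -> ex_c e' t = ex_c e t.
Proof.
exists extension; split; first exact: extension_weakly_fair.
exact: extension_config_prefix.
Qed.

End WeaklyFairExtension.

Lemma strongly_fair_visits (S : finType) (R : seq (reaction S)) c0
    (e e' : execution R c0) t0 :
  strongly_fair e -> infinitely_often (ex_c e) (ex_c e t0) ->
  (forall t, t <= t0 -> ex_c e' t = ex_c e t) ->
  forall t, exists t', ex_c e t' = ex_c e' t.
Proof.
move=> e_fair recurrent same_prefix t; case: (leqP t t0) => [le_t_t0|lt_t0_t].
  by exists t; rewrite same_prefix.
have reach_t : reach R (ex_c e t0) (ex_c e' t).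
  by rewrite -same_prefix //; apply: reach_execution; exact: ltnW.
by have [t' [_ eq_t']] := e_fair _ recurrent _ reach_t 0; exists t'.
Qed.

Lemma into_visits (S : finType) (R : seq (reaction S)) c0
    (e e' : execution R c0) (Z : config S -> Prop) m :
  (forall t, exists t', ex_c e t' = ex_c e' t) -> into m e' Z -> into m e Z.
Proof.
by move=> visits; case: m => -[t into_t]; have [t' eq_t'] := visits t;
  exists t'; rewrite eq_t'.
Qed.

Theorem corollary3p4 (S : finType) (R : seq (reaction S)) (U : finType)
  (mu : S -> U) (C : {ffun U -> nat} -> {ffun U -> nat} -> Prop) :
  is_protocol R ->
  forall m : mode, correct m Weak R mu C -> correct m Strong R mu C.
Proof.
move=> protocolR m weakly_correct c0 c0_valid e e_fair.
have c0_gt0 := c0_valid.1.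
have [t0 recurrent] := execution_recurrent e protocolR c0_gt0.
have [e' [e'_fair same_prefix]] := weakly_fair_extension e t0 protocolR c0_gt0.
apply: into_visits (strongly_fair_visits e_fair recurrent same_prefix) _.
exact: weakly_correct.
Qed.
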